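(* Let $\mu\in\mathcal{L}$ and let $\alpha\neq\beta$ be atoms of $\mu$. Then \[ \min\big(\mu(\{\alpha\}),\mu(\{\beta\})\big)<\frac{2\pi}{|\alpha-\beta|}. \]
   Context: For a probability measure $\mu$ on $\mathbb{R}$, $G_\mu(z)=\int\frac{d\mu(x)}{z-x}$ and $F_\mu=1/G_\mu$ on the upper half-plane $\mathbb{C}^+$. $\mathcal{L}$ is the set of probability measures $\mu$ on $\mathbb{R}$ with $F_\mu(z+2\pi)=F_\mu(z)+2\pi$ for all $z\in\mathbb{C}^+$. *)

From mathcomp Require Import all_boot all_order all_algebra.
From mathcomp Require Import all_classical all_reals all_analysis.
From mathcomp Require Export complex.
Import GRing.Theory Num.Theory.
Local Open Scope ring_scope.

Definition cintegral {R : realType} (mu : probability R R) (f : R -> R[i]) : R[i] :=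
  Complex (Rintegral mu setT (fun x => complex.Re (f x)))
          (Rintegral mu setT (fun x => complex.Im (f x))).

Definition Gmu {R : realType} (mu : probability R R) (z : R[i]) : R[i] :=
  cintegral mu (fun x => (z - Complex x 0)^-1).

Definition Fmu {R : realType} (mu : probability R R) (z : R[i]) : R[i] :=
  (Gmu mu z)^-1.

Definition in_L {R : realType} (mu : probability R R) : Prop :=
  forall z : R[i], 0 < complex.Im z ->
    Fmu mu (z + Complex (2 * pi) 0) = Fmu mu z + Complex (2 * pi) 0.

(* For mu in L, H(z) := F_mu(z) - z is 2 pi-periodic on the upper half-plane, and
   it is a Pick function: with psi_z(x) := F_mu(z) / (z - x) - 1 one has
   \int psi_z conj(psi_w) dmu = (H(z) - conj H(w)) / (z - conj w), so its Pick
   matrices are Gram matrices.  An atom of mass m at s confines F_mu(s + iy) to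
   the square of half-side y / m, hence H(s + iy) is close to -s - iy.  If the
   atoms alpha < beta both had mass >= 2 pi / (beta - alpha), shift beta + iy by
   the multiple c of 2 pi nearest to beta - alpha: the points alpha + iy and
   beta - c + iy are within pi of each other while their H-values are about
   beta - alpha >= 2 pi apart, which the 2x2 Pick inequality forbids. *)

From mathcomp Require Import all_boot all_order all_algebra.
From mathcomp Require Import all_classical all_reals all_analysis.
From mathcomp Require Import measurable_realfun ring lra.
Import Order.TTheory GRing.Theory Num.Theory.
Import numFieldNormedType.Exports.
Local Open Scope ring_scope.

(* Unqualified [Re] and [Im] are the [R[i]]-valued parts of numClosedFieldType. *)
Local Notation Re := (@complex.Re _).
Local Notation Im := (@complex.Im _).

Section complex_integral.
Context {R : realType} (mu : probability R R).

Definition cintegrable (f : R -> R[i]) : Prop :=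
  mu.-integrable setT (EFin \o (Re \o f)) /\ mu.-integrable setT (EFin \o (Im \o f)).

Lemma integrable_lincomb (a b : R) {f g : R -> R} :
  mu.-integrable setT (EFin \o f) -> mu.-integrable setT (EFin \o g) ->
  mu.-integrable setT (EFin \o (fun x => a * f x + b * g x)).
Proof.
move=> intf intg.
have intD := integrableD measurableT (integrableZl measurableT a intf)
  (integrableZl measurableT b intg).
apply: (eq_integrable measurableT _ _ _ intD).
by move=> x _ /=; rewrite EFinD !EFinM.
Qed.

Lemma Rintegral_lincomb (a b : R) {f g : R -> R} :
  mu.-integrable setT (EFin \o f) -> mu.-integrable setT (EFin \o g) ->
  \int[mu]_x (a * f x + b * g x) = a * \int[mu]_x f x + b * \int[mu]_x g x.
Proof.
move=> intf intg.
have intZ c h : mu.-integrable setT (EFin \o h) ->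
    mu.-integrable setT (EFin \o (fun x => c * h x)).
  move=> inth.
  exact: (eq_integrable measurableT _ _ _ (integrableZl measurableT c inth)).
rewrite RintegralD //; try exact: intZ.
by rewrite !RintegralZl.
Qed.

Lemma bounded_integrable {f : R -> R} (M : R) :
  measurable_fun setT f -> (forall x, `|f x| <= M) -> mu.-integrable setT (EFin \o f).
Proof.
move=> mf fM; apply: measurable_bounded_integrable => //.
  by rewrite -ge0_fin_numE // fin_num_measure.
rewrite /bounded_near; near=> N => x _ /=.
by apply: (le_trans (fM x)); near: N; apply: nbhs_pinfty_ge; rewrite num_real.
Unshelve. all: end_near.
Qed.

Lemma cintegrable_cst (k : R[i]) : cintegrable (fun=> k).
Proof. by split; exact: finite_measure_integrable_cst. Qed.

Lemma cintegrableD (f g : R -> R[i]) :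
  cintegrable f -> cintegrable g -> cintegrable (fun x => f x + g x).
Proof.
move=> [fRe fIm] [gRe gIm]; split.
- apply: (eq_integrable measurableT _ _ _ (integrable_lincomb 1 1 fRe gRe)).
  by move=> x _ /=; rewrite !mul1r; case: (f x); case: (g x).
- apply: (eq_integrable measurableT _ _ _ (integrable_lincomb 1 1 fIm gIm)).
  by move=> x _ /=; rewrite !mul1r; case: (f x); case: (g x).
Qed.

Lemma cintegrableZl (k : R[i]) (f : R -> R[i]) :
  cintegrable f -> cintegrable (fun x => k * f x).
Proof.
move=> [fRe fIm]; split.
- apply: (eq_integrable measurableT _ _ _ (integrable_lincomb (Re k) (- Im k) fRe fIm)).
  by move=> x _ /=; congr EFin; case: k; case: (f x) => * /=; ring.
- apply: (eq_integrable measurableT _ _ _ (integrable_lincomb (Im k) (Re k) fRe fIm)).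
  by move=> x _ /=; congr EFin; case: k; case: (f x) => * /=; ring.
Qed.

Lemma cintegrable_conj (f : R -> R[i]) :
  cintegrable f -> cintegrable (fun x => (f x)^*).
Proof.
move=> [fRe fIm]; split.
- apply: (eq_integrable measurableT _ _ _ (integrable_lincomb 1 0 fRe fIm)).
  by move=> x _ /=; congr EFin; case: (f x) => * /=; ring.
- apply: (eq_integrable measurableT _ _ _ (integrable_lincomb 0 (-1) fRe fIm)).
  by move=> x _ /=; congr EFin; case: (f x) => * /=; ring.
Qed.

Lemma cintegral_cst (k : R[i]) : cintegral mu (fun=> k) = k.
Proof.
rewrite /cintegral !Rintegral_cst // (_ : fine _ = 1).
  by case: k => a b; rewrite !mulr1.
exact: (f_equal fine (probability_setT mu)).
Qed.

Lemma cintegralD (f g : R -> R[i]) : cintegrable f -> cintegrable g ->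
  cintegral mu (fun x => f x + g x) = cintegral mu f + cintegral mu g.
Proof.
move=> [fRe fIm] [gRe gIm]; rewrite /cintegral /=; congr Complex.
- transitivity (\int[mu]_x (1 * Re (f x) + 1 * Re (g x))).
    by apply: eq_Rintegral => x _; case: (f x); case: (g x) => * /=; ring.
  by rewrite Rintegral_lincomb // !mul1r.
- transitivity (\int[mu]_x (1 * Im (f x) + 1 * Im (g x))).
    by apply: eq_Rintegral => x _; case: (f x); case: (g x) => * /=; ring.
  by rewrite Rintegral_lincomb // !mul1r.
Qed.

Lemma cintegralZl (k : R[i]) (f : R -> R[i]) : cintegrable f ->
  cintegral mu (fun x => k * f x) = k * cintegral mu f.
Proof.
move=> [fRe fIm]; rewrite /cintegral.
transitivity (Complex (\int[mu]_x (Re k * Re (f x) + - Im k * Im (f x)))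
                      (\int[mu]_x (Im k * Re (f x) + Re k * Im (f x)))).
  by congr Complex; apply: eq_Rintegral => x _; case: k; case: (f x) => * /=; ring.
by rewrite !Rintegral_lincomb //; case: k => * /=; congr Complex; ring.
Qed.

Lemma cintegral_conj (f : R -> R[i]) : cintegrable f ->
  cintegral mu (fun x => (f x)^*) = (cintegral mu f)^*.
Proof.
move=> [fRe fIm]; rewrite /cintegral.
transitivity (Complex (\int[mu]_x (1 * Re (f x) + 0 * Im (f x)))
                      (\int[mu]_x (0 * Re (f x) + -1 * Im (f x)))).
  by congr Complex; apply: eq_Rintegral => x _; case: (f x) => * /=; ring.
by rewrite !Rintegral_lincomb //= ; congr Complex; ring.
Qed.

Lemma Re_cintegral_ge0 (f : R -> R[i]) :
  (forall x, 0 <= Re (f x)) -> 0 <= Re (cintegral mu f).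
Proof. by move=> f_ge0; apply: Rintegral_ge0 => x _. Qed.

End complex_integral.

Definition ckernel {R : realType} (z : R[i]) (x : R) : R[i] := (z - Complex x 0)^-1.

Section cauchy_kernel.
Context {R : realType}.

Lemma ckernelE (a y x : R) :
  ckernel (Complex a y) x =
  Complex ((a - x) / ((a - x) ^+ 2 + y ^+ 2)) (- y / ((a - x) ^+ 2 + y ^+ 2)).
Proof. by apply/eqP; rewrite eq_complex /= subr0 mulNr !eqxx. Qed.

Lemma cintegrable_ckernel (mu : probability R R) {z : R[i]} :
  0 < Im z -> cintegrable mu (ckernel z).
Proof.
case: z => a y /= y_gt0.
pose den x := (a - x) ^+ 2 + y ^+ 2.
have den_gt0 x : 0 < den x by rewrite ltr_wpDl ?sqr_ge0 ?exprn_gt0.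
have cont_den : continuous den.
  rewrite (_ : den = horner ((a%:P - 'X) ^+ 2 + (y ^+ 2)%:P)).
    exact: continuous_horner.
  by apply/funext => x; rewrite /den !hornerE.
have cont_cst_div b : continuous (fun x => b / den x).
  move=> x; apply: (continuousM (s := fun=> b) (t := fun x => (den x)^-1)).
    exact: cst_continuous.
  by apply: continuousV; [rewrite gt_eqF | exact: cont_den].
split.
- rewrite (_ : Re \o _ = fun x => (a%:P - 'X).[x] / den x); last first.
    by apply/funext => x; rewrite /comp ckernelE !hornerE.
  apply: (bounded_integrable mu y^-1).
    apply: continuous_measurable_fun => x.
    apply: (continuousM (s := horner (a%:P - 'X)) (t := fun x => (den x)^-1)).
      exact: continuous_horner.
    by apply: continuousV; [rewrite gt_eqF | exact: cont_den].
  move=> x; rewrite !hornerE normrM normfV (gtr0_norm (den_gt0 x)).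
  rewrite ler_pdivrMr // ler_pdivlMl //.
  have := sqr_ge0 (`|a - x| - y).
  by rewrite /den -(real_normK (num_real (a - x))) !expr2; nra.
- rewrite (_ : Im \o _ = fun x => - y / den x); last first.
    by apply/funext => x; rewrite /comp ckernelE.
  apply: (bounded_integrable mu y^-1).
    exact: continuous_measurable_fun.
  move=> x; rewrite normrM normfV normrN (gtr0_norm (den_gt0 x)) gtr0_norm //.
  rewrite ler_pdivrMr // ler_pdivlMl //.
  by rewrite /den !expr2; have := sqr_ge0 (a - x); rewrite expr2; nra.
Qed.

Lemma sub_real_neq0 (z : R[i]) (x : R) : Im z != 0 -> z - Complex x 0 != 0.
Proof. by case: z => a b /= b_neq0; apply: contra b_neq0 => /eqP[_ <-]; rewrite subr0. Qed.

Lemma conj_ckernel (z : R[i]) (x : R) : (ckernel z x)^* = ckernel z^* x.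
Proof.
rewrite /ckernel fmorphV rmorphB; congr (_ - _)^-1.
by apply/eqP; rewrite eq_complex /= oppr0 !eqxx.
Qed.

Lemma ckernel_mul (z w : R[i]) (x : R) :
  Im z != 0 -> Im w != 0 -> z != w ->
  ckernel z x * ckernel w x = (ckernel z x - ckernel w x) / (w - z).
Proof.
move=> /(sub_real_neq0 _ x) zx_neq0 /(sub_real_neq0 _ x) wx_neq0.
rewrite -subr_eq0 => zw_neq0.
rewrite /ckernel; field.
by rewrite zx_neq0 wx_neq0 -oppr_eq0 opprB zw_neq0.
Qed.

Lemma Im_conj_neq0 (z : R[i]) : 0 < Im z -> Im z^* != 0.
Proof. by case: z => a b /= b_gt0; rewrite oppr_eq0 gt_eqF. Qed.

Lemma upper_neq_conj (z w : R[i]) : 0 < Im z -> 0 < Im w -> z != w^*.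
Proof.
case: z => a b; case: w => c e /= b_gt0 e_gt0.
by apply/eqP => -[_ be]; move: b_gt0; rewrite be oppr_gt0 ltNge (ltW e_gt0).
Qed.

Lemma Re_mul_conj_ge0 (w : R[i]) : 0 <= Re (w * w^*).
Proof. by case: w => a b /=; nra. Qed.

End cauchy_kernel.

Definition pick_kernel {R : realType} (h : R[i] -> R[i]) (z w : R[i]) : R[i] :=
  (h z - (h w)^*) / (z - w^*).

Definition pick_form2 {R : realType} (h : R[i] -> R[i]) (z1 z2 v1 v2 : R[i]) : R[i] :=
  v1 * v1^* * pick_kernel h z1 z1 + v1 * v2^* * pick_kernel h z1 z2
  + v2 * v1^* * pick_kernel h z2 z1 + v2 * v2^* * pick_kernel h z2 z2.

Definition Hmu {R : realType} (mu : probability R R) (z : R[i]) : R[i] := Fmu mu z - z.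

Definition Fkernel {R : realType} (mu : probability R R) (z : R[i]) (x : R) : R[i] :=
  Fmu mu z * ckernel z x - 1.

Section pick.
Context {R : realType} (mu : probability R R).

Lemma Fkernel_mul_conj {z w : R[i]} (x : R) : 0 < Im z -> 0 < Im w ->
  let F := Fmu mu z in let F' := (Fmu mu w)^* in
  Fkernel mu z x * (Fkernel mu w x)^* =
  1 + (F * F' / (w^* - z) - F) * ckernel z x
    + (- (F * F' / (w^* - z)) - F') * (ckernel w x)^*.
Proof.
move=> z_gt0 w_gt0 F F'; rewrite /Fkernel rmorphB rmorphM rmorph1 /= conj_ckernel -/F'.
transitivity (F * F' * (ckernel z x * ckernel w^* x)
              - F * ckernel z x - F' * ckernel w^* x + 1).
  by rewrite /F; ring.
by rewrite ckernel_mul ?upper_neq_conj ?Im_conj_neq0 ?gt_eqF //; ring.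
Qed.

Lemma cintegrable_Fkernel_mul_conj (z w : R[i]) : 0 < Im z -> 0 < Im w ->
  cintegrable mu (fun x => Fkernel mu z x * (Fkernel mu w x)^*).
Proof.
move=> z_gt0 w_gt0; rewrite (funext (fun x => Fkernel_mul_conj x z_gt0 w_gt0)).
apply: cintegrableD; last exact/cintegrableZl/cintegrable_conj/cintegrable_ckernel.
by apply: cintegrableD; [exact: cintegrable_cst | exact/cintegrableZl/cintegrable_ckernel].
Qed.

Lemma cintegral_Fkernel_mul_conj (z w : R[i]) : 0 < Im z -> 0 < Im w ->
  Gmu mu z != 0 -> Gmu mu w != 0 ->
  cintegral mu (fun x => Fkernel mu z x * (Fkernel mu w x)^*) = pick_kernel (Hmu mu) z w.
Proof.
move=> z_gt0 w_gt0 Gz_neq0 Gw_neq0.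
have kz := cintegrable_ckernel mu z_gt0; have kw := cintegrable_ckernel mu w_gt0.
rewrite (funext (fun x => Fkernel_mul_conj x z_gt0 w_gt0)) /=.
rewrite cintegralD; [| by apply: cintegrableD; [exact: cintegrable_cst | exact/cintegrableZl]
                    | exact/cintegrableZl/cintegrable_conj].
rewrite cintegralD ?cintegral_cst; [|exact: cintegrable_cst | exact/cintegrableZl].
rewrite !cintegralZl ?cintegral_conj //; last exact/cintegrable_conj.
rewrite -/(Gmu mu z) -/(Gmu mu w) /pick_kernel /Hmu /Fmu.
have zw_neq0 : z - w^* != 0 by rewrite subr_eq0 upper_neq_conj.
have wz_neq0 : w^* - z != 0 by rewrite -oppr_eq0 opprB.
rewrite !(rmorphB, fmorphV) /=; field.
by rewrite Gz_neq0 conjC_eq0 Gw_neq0 zw_neq0 wz_neq0.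
Qed.

Lemma Re_pick_form2_Hmu_ge0 (z1 z2 v1 v2 : R[i]) : 0 < Im z1 -> 0 < Im z2 ->
  Gmu mu z1 != 0 -> Gmu mu z2 != 0 -> 0 <= Re (pick_form2 (Hmu mu) z1 z2 v1 v2).
Proof.
move=> z1_gt0 z2_gt0 G1_neq0 G2_neq0.
rewrite /pick_form2 -!cintegral_Fkernel_mul_conj // -!cintegralZl;
  try exact: cintegrable_Fkernel_mul_conj.
rewrite -!cintegralD;
  try by repeat apply: cintegrableD; apply/cintegrableZl/cintegrable_Fkernel_mul_conj.
apply: Re_cintegral_ge0 => x /=.
move: (Fkernel mu z1 x) (Fkernel mu z2 x) => k1 k2.
rewrite (_ : _ + _ = (v1 * k1 + v2 * k2) * (v1 * k1 + v2 * k2)^*) ?Re_mul_conj_ge0 //.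
by rewrite rmorphD !rmorphM /=; ring.
Qed.

End pick.

(* The weight [k (z1^* - z2)] cancels the denominators of the off-diagonal kernels. *)
Lemma Re_pick_form2 {R : realType} (h : R[i] -> R[i]) (z1 z2 : R[i]) (k : R) :
  0 < Im z1 -> 0 < Im z2 ->
  Re (pick_form2 h z1 z2 1 (Complex k 0 * (z1^* - z2))) =
  Im (h z1) / Im z1
  + k ^+ 2 * ((Re z1 - Re z2) ^+ 2 + (Im z1 + Im z2) ^+ 2) * (Im (h z2) / Im z2)
  + 2 * k * Re (h z1 - h z2).
Proof.
rewrite /pick_form2 /pick_kernel; move: (h z1) (h z2) => [p1 q1] [p2 q2].
case: z1 z2 => [a1 b1] [a2 b2] /= b1_gt0 b2_gt0.
field; apply/and5P; split;
  by rewrite gt_eqF // ?opprK ?ltr_wpDl ?sqr_ge0 ?exprn_gt0 ?addr_gt0.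
Qed.

Lemma invc_bounds {R : realType} {b : R} {w : R[i]} : 0 < b -> Im w <= - b ->
  [/\ `|Re w^-1| <= b^-1, 0 < Im w^-1 & Im w^-1 <= b^-1].
Proof.
case: w => g1 g2 /= b_gt0 g2_le.
have N_gt0 : 0 < g1 ^+ 2 + g2 ^+ 2 by rewrite !expr2; nra.
rewrite -mulNr normrM normfV (gtr0_norm N_gt0); split.
- rewrite ler_pdivrMr // ler_pdivlMl //.
  have := sqr_ge0 (`|g1| - b); rewrite -[g1 ^+ 2](real_normK (num_real g1)) !expr2; nra.
- by rewrite divr_gt0 // oppr_gt0 (le_lt_trans g2_le) // oppr_lt0.
- by rewrite ler_pdivrMr // ler_pdivlMl // !expr2; nra.
Qed.

Section atoms.
Context {R : realType} (mu : probability R R).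

Lemma Im_Gmu_atom (s : R) {y : R} : 0 < y ->
  Im (Gmu mu (Complex s y)) <= - (fine (mu [set s]%classic) / y).
Proof.
move=> y_gt0; have ind := integrable_indic mu (measurable_set1 s).
have -> : - (fine (mu [set s]%classic) / y) = \int[mu]_x (- y^-1 * \1_[set s]%classic x).
  rewrite RintegralZl //.
  by rewrite /Rintegral integral_indic ?setIT // mulNr mulrC.
apply: le_Rintegral => //.
- exact: (@cintegrable_ckernel _ mu (Complex s y) y_gt0).2.
- by apply: (eq_integrable measurableT _ _ _ (integrableZl measurableT (- y^-1) ind)).
move=> x _; rewrite -/(ckernel _ x) ckernelE /= indicE.
have den_gt0 : 0 < (s - x) ^+ 2 + y ^+ 2 by rewrite ltr_wpDl ?sqr_ge0 ?exprn_gt0.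
have [<-|x_neq_s] := eqVneq x s.
  rewrite mem_set // subrr expr0n /= add0r mulr1 expr2 invfM mulrA mulNr.
  by rewrite divff ?gt_eqF // mulN1r.
rewrite memNset /=; last by move=> /= xs; rewrite xs eqxx in x_neq_s.
by rewrite mulr0 mulNr oppr_le0 divr_ge0 // ltW.
Qed.

Lemma Fmu_atom_bounds (s : R) {y : R} : 0 < y -> 0 < fine (mu [set s]%classic) ->
  let F := Fmu mu (Complex s y) in let m := fine (mu [set s]%classic) in
  [/\ Gmu mu (Complex s y) != 0, `|Re F| <= y / m, 0 < Im F & Im F <= y / m].
Proof.
move=> y_gt0 m_gt0 F m; have b_gt0 : 0 < m / y by rewrite divr_gt0.
have /(invc_bounds b_gt0) [ReF ImF_gt0 ImF] := Im_Gmu_atom s y_gt0.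
rewrite -/(Fmu _ _) invf_div in ReF ImF_gt0 ImF; split=> //.
by apply: contraTneq ImF_gt0 => G0; rewrite /Fmu G0 invr0 ltxx.
Qed.

End atoms.

Lemma exists_nat_mul_near {R : realType} {p d : R} : 0 < p -> 0 <= d ->
  exists n : nat, `|d - p * n%:R| <= p / 2.
Proof.
move=> p_gt0 d_ge0; have x_ge0 : 0 <= d / p + 2^-1 by rewrite addr_ge0 ?divr_ge0 // ltW.
have /andP[n_le n_gt] := truncn_itv x_ge0; exists (Num.truncn (d / p + 2^-1)).
move: (Num.truncn _) n_le n_gt => n n_le n_gt.
have pn_le : p * n%:R <= d + p / 2.
  by have := ler_wpM2l (ltW p_gt0) n_le; rewrite mulrDr mulrCA divff ?gt_eqF // mulr1.
have pn_gt : d + p / 2 < p * n%:R + p.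
  move: n_gt; rewrite -(ltr_pM2l p_gt0) mulrDr mulrCA divff ?gt_eqF // mulr1.
  by rewrite -[n.+1%:R]natr1 mulrDr mulr1.
by rewrite ler_norml; apply/andP; split; lra.
Qed.

Lemma pick_bound_lt0 {R : realType} (p d m1 m2 e p1 q1 p2 q2 : R) :
  0 < p -> 2 * p <= d -> 2 * p / d <= m1 -> 2 * p / d <= m2 -> `|e| <= p ->
  `|p1| <= p / 4 / m1 -> q1 <= p / 4 / m1 -> `|p2| <= p / 4 / m2 -> q2 <= p / 4 / m2 ->
  (q1 - p / 4) / (p / 4)
  + (- p^-1) ^+ 2 * (e ^+ 2 + (p / 4 + p / 4) ^+ 2) * ((q2 - p / 4) / (p / 4))
  + 2 * - p^-1 * (p1 - p2 + d) < 0.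
Proof.
move=> p_gt0 d_ge m1_ge m2_ge e_le p1_le q1_le p2_le q2_le.
(* With r := d / (2 p) >= 1, the three summands are at most r - 1, 5/4 (r - 1)
   and -3 r. *)
have d_gt0 : 0 < d by apply: lt_le_trans d_ge; rewrite mulr_gt0.
pose r := d / (2 * p).
have r_ge1 : 1 <= r by rewrite ler_pdivlMr ?mul1r // mulr_gt0.
have d_eq : d = 2 * p * r by rewrite /r mulrC divfK // gt_eqF // mulr_gt0.
have Vm_le m : 2 * p / d <= m -> m^-1 <= r.
  move=> m_ge; have m_gt0 : 0 < m by apply: lt_le_trans m_ge; rewrite !mulr_gt0 ?invr_gt0.
  by rewrite /r -invf_div lef_pV2 ?posrE ?divr_gt0 ?mulr_gt0.
have scaled_le q m : 2 * p / d <= m -> q <= p / 4 / m -> (q - p / 4) / (p / 4) <= r - 1.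
  move=> /Vm_le m_le q_le; rewrite ler_pdivrMr ?divr_gt0 // mulrBl mul1r lerD2r.
  by apply: le_trans q_le _; rewrite [r * _]mulrC ler_wpM2l // divr_ge0 // ltW.
have W_le : (- p^-1) ^+ 2 * (e ^+ 2 + (p / 4 + p / 4) ^+ 2) <= 5 / 4.
  rewrite sqrrN exprVn ler_pdivrMl ?exprn_gt0 //.
  have : e ^+ 2 <= p ^+ 2.
    by move: e_le; rewrite ler_norml => /andP[? ?]; rewrite !expr2; nra.
  lra.
have W_ge0 : 0 <= (- p^-1) ^+ 2 * (e ^+ 2 + (p / 4 + p / 4) ^+ 2).
  by rewrite mulr_ge0 ?addr_ge0 ?sqr_ge0.
have cross_le : 2 * - p^-1 * (p1 - p2 + d) <= - 3 * r.
  have bound_le (q m : R) : 2 * p / d <= m -> `|q| <= p / 4 / m -> `|q| <= p / 4 * r.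
    move=> /Vm_le m_le q_le; apply: le_trans q_le _.
    by rewrite ler_wpM2l // divr_ge0 // ltW.
  have := bound_le _ _ m1_ge p1_le; have := bound_le _ _ m2_ge p2_le.
  rewrite !ler_norml => /andP[_ p2_le'] /andP[p1_ge' _].
  have X_ge : 3 / 2 * p * r <= p1 - p2 + d by rewrite d_eq; lra.
  rewrite mulrN mulNr [- 3 * r]mulNr lerN2.
  have -> : 3 * r = 2 * p^-1 * (3 / 2 * p * r) by field; rewrite gt_eqF.
  by rewrite ler_wpM2l // mulr_ge0 // invr_ge0 ltW.
have := scaled_le _ _ m1_ge q1_le; have := scaled_le _ _ m2_ge q2_le.
move: W_le W_ge0 cross_le; set W := _ * _; set X := 2 * _ * _.
set A := (q1 - _) / _; set B := (q2 - _) / _; clearbody W X A B r.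
nra.
Qed.

Section periodic.
Context {R : realType} {mu : probability R R} (hL : in_L mu).

Lemma Hmu_add_2pi (z : R[i]) : 0 < Im z -> Hmu mu (z + Complex (2 * pi) 0) = Hmu mu z.
Proof. by move=> z_gt0; rewrite /Hmu hL //; ring. Qed.

Lemma Hmu_periodic (z : R[i]) (n : nat) : 0 < Im z ->
  Hmu mu (z + Complex (2 * pi * n%:R) 0) = Hmu mu z.
Proof.
move=> z_gt0; elim: n => [|n IHn]; first by rewrite mulr0 addr0.
have -> : Complex (2 * pi * n.+1%:R) 0
          = Complex (2 * pi * n%:R) 0 + Complex (2 * pi) 0 :> R[i].
  by apply/eqP; rewrite eq_complex /= addr0 -[n.+1%:R]natr1 mulrDr mulr1 !eqxx.
by rewrite addrA Hmu_add_2pi //; case: z z_gt0 {IHn} => a b /=; rewrite addr0.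
Qed.

End periodic.

Lemma pick_ineq_translate {R : realType} {mu : probability R R} (hL : in_L mu)
    (s t y k : R) (n : nat) :
  0 < y -> Gmu mu (Complex s y) != 0 -> 0 < Im (Fmu mu (Complex t y)) ->
  0 <= Im (Hmu mu (Complex s y)) / y
       + k ^+ 2 * ((s - (t - 2 * pi * n%:R)) ^+ 2 + (y + y) ^+ 2)
         * (Im (Hmu mu (Complex t y)) / y)
       + 2 * k * Re (Hmu mu (Complex s y) - Hmu mu (Complex t y)).
Proof.
move=> y_gt0 G1_neq0 ImF2_gt0.
set z1 := Complex s y; set z2 := Complex (t - 2 * pi * n%:R) y.
have H2E : Hmu mu z2 = Hmu mu (Complex t y).
  rewrite -(Hmu_periodic hL z2 n) //; congr Hmu.
  by apply/eqP; rewrite eq_complex /= subrK addr0 !eqxx.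
have G2_neq0 : Gmu mu z2 != 0.
  have ImF2 : Im (Fmu mu z2) = Im (Fmu mu (Complex t y)).
    by move/eqP: H2E; rewrite /Hmu subr_eq => /eqP ->; case: (Fmu _ _) => a b /=; ring.
  by apply: contraTneq ImF2_gt0 => G0; rewrite -ImF2 /Fmu G0 invr0 ltxx.
have := Re_pick_form2_Hmu_ge0 mu z1 z2 1 (Complex k 0 * (z1^* - z2))
  y_gt0 y_gt0 G1_neq0 G2_neq0.
by rewrite Re_pick_form2 // H2E.
Qed.

Lemma min_atoms_lt {R : realType} (mu : probability R R) (hL : in_L mu) (s t : R) :
  s < t -> 0 < fine (mu [set s]%classic) -> 0 < fine (mu [set t]%classic) ->
  Num.min (fine (mu [set s]%classic)) (fine (mu [set t]%classic)) < 2 * pi / (t - s).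
Proof.
move=> lt_st ms_gt0 mt_gt0; set ms := fine _ in ms_gt0 *; set mt := fine _ in mt_gt0 *.
set d := t - s; have d_gt0 : 0 < d by rewrite subr_gt0.
have pi_pos : 0 < pi :> R := pi_gt0 R.
rewrite ltNge le_min; apply/negP => /andP[ms_ge mt_ge].
have ms_le1 : ms <= 1 by rewrite -lee_fin fineK ?fin_num_measure // probability_le1.
have d_ge : 2 * pi <= d.
  rewrite leNgt; apply/negP => d_lt.
  have : 1 < 2 * pi / d by rewrite ltr_pdivlMr // mul1r.
  by move=> /lt_le_trans/(_ ms_ge); rewrite ltNge ms_le1.
have two_pi_gt0 : 0 < 2 * pi :> R by rewrite mulr_gt0.
have [n c_near] := exists_nat_mul_near two_pi_gt0 (ltW d_gt0).
pose y : R := pi / 4; have y_gt0 : 0 < y by rewrite divr_gt0.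
have [G1_neq0 ReF1 _ ImF1] := Fmu_atom_bounds mu s y_gt0 ms_gt0.
have [_ ReF2 ImF2_gt0 ImF2] := Fmu_atom_bounds mu t y_gt0 mt_gt0.
have := pick_ineq_translate hL s t y (- pi^-1) n y_gt0 G1_neq0 ImF2_gt0.
rewrite /Hmu; move: ReF1 ImF1 ReF2 ImF2.
case: (Fmu mu (Complex s y)) => p1 q1; case: (Fmu mu (Complex t y)) => p2 q2 /=.
move=> p1_le q1_le p2_le q2_le; apply/negP; rewrite -ltNge.
rewrite (_ : p1 - s - (p2 - t) = p1 - p2 + d); last by rewrite /d; ring.
apply: (@pick_bound_lt0 _ pi d ms mt) => //.
rewrite (_ : s - (t - _) = - (d - 2 * pi * n%:R)) ?normrN; last by rewrite /d; ring.
by rewrite [X in _ <= X]mulrAC divff ?mul1r ?pnatr_eq0 in c_near.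
Qed.

Theorem corollary5p15 (R : realType) (mu : probability R R) (hL : in_L mu)
    (alpha beta : R) (hab : alpha != beta)
    (ha : (0 < mu [set alpha]%classic)%E) (hb : (0 < mu [set beta]%classic)%E) :
  (mine (mu [set alpha]%classic) (mu [set beta]%classic)
     < ((2 * pi) / `|alpha - beta|)%:E)%E.
Proof.
wlog lt_ab : alpha beta hab ha hb / alpha < beta.
  move=> wlog_lt; case: (ltgtP alpha beta) => [lt_ab | lt_ba | eq_ab].
  - exact: wlog_lt.
  - by rewrite minC distrC; apply: wlog_lt; rewrite // eq_sym.
  - by rewrite eq_ab eqxx in hab.
have atomE x : mu [set x]%classic = (fine (mu [set x]%classic))%:E.
  by rewrite fineK // fin_num_measure.
rewrite atomE [X in mine _ X]atomE -EFin_min lte_fin distrC gtr0_norm ?subr_gt0 //.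
by apply: min_atoms_lt; rewrite // -lte_fin -atomE.
Qed.
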